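(* Let $n \geq 1$ and $m \geq 3$ be integers. The corona graph $P_n \circ C_m$ is a total edge product cordial graph.
   Context: All graphs are finite and simple. $P_k$ denotes the path on $k$ vertices and $C_k$ the cycle on $k$ vertices. For graphs $G$ and $H$ with $V(G)=\{u_1,\dots,u_n\}$, the corona graph $G \circ H$ is obtained by taking one copy of $G$ and $n$ disjoint copies $H^1,\dots,H^n$ of $H$, and joining each vertex $u_i$ by an edge to every vertex of $H^i$. Given an edge labeling $f^*: E(G) \to \{0,1\}$, the induced vertex labeling $f: V(G)\to\{0,1\}$ is $f(v) = \prod\{f^*(uv) : uv \in E(G)\}$ (product of the labels of edges incident to $v$). Let $v_f(i)$ be the number of vertices with $f(v)=i$ and $e_f(i)$ the number of edges with $f^*(e)=i$, for $i=0,1$. The labeling $f^*$ is a total edge product cordial labeling if $|(v_f(0)+e_f(0)) - (v_f(1)+e_f(1))| \leq 1$, and a graph is total edge product cordial if it admits such a labeling. *)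

From mathcomp Require Import all_boot.
Set Implicit Arguments. Unset Strict Implicit. Unset Printing Implicit Defensive.

(* A finite simple graph is given by a vertex finType V and an adjacency
   relation e : rel V (symmetric, irreflexive for the graphs used below). *)

Definition path_adj (n : nat) : rel 'I_n :=
  fun i j => (i.+1 == j :> nat) || (j.+1 == i :> nat).

(* Cycle C_m on vertices 0..m-1 (simple for m >= 3). *)
Definition cycle_adj (m : nat) : rel 'I_m :=
  fun i j => (i.+1 %% m == j :> nat) || (j.+1 %% m == i :> nat).

(* Corona G o H: vertices are V (copy of G) plus V * W (copy H^u of H for each u). *)
Definition corona_adj (V W : finType) (eG : rel V) (eH : rel W) : rel (V + (V * W)) :=
  fun a b =>
    match a, b with
    | inl u, inl v => eG u v
    | inl u, inr (i, _) => u == i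
    | inr (i, _), inl u => i == u
    | inr (i, w), inr (j, w') => (i == j) && eH w w'
    end.

Definition edges (V : finType) (e : rel V) : {set {set V}} :=
  [set A : {set V} | [exists x, exists y, (A == [set x; y]) && e x y]].

Definition vlabel (V : finType) (e : rel V) (g : {set V} -> bool) (v : V) : nat :=
  \prod_(A in edges e | v \in A) (nat_of_bool (g A)).

Definition v_count (V : finType) (e : rel V) (g : {set V} -> bool) (i : nat) : nat :=
  #|[set v : V | vlabel e g v == i]|.

Definition e_count (V : finType) (e : rel V) (g : {set V} -> bool) (i : nat) : nat :=
  #|[set A in edges e | nat_of_bool (g A) == i]|.

Definition total_edge_product_cordial_labeling (V : finType) (e : rel V)
    (g : {set V} -> bool) : Prop :=
  let a := v_count e g 0 + e_count e g 0 in
  let b := v_count e g 1 + e_count e g 1 in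
  a <= b + 1 /\ b <= a + 1.

Definition total_edge_product_cordial (V : finType) (e : rel V) : Prop :=
  exists g : {set V} -> bool, total_edge_product_cordial_labeling e g.

(* Labelling a set Z of edges by 0 and every other edge by 1 gives label 0 exactly
   to the vertices covered by Z, so the labelling is cordial as soon as
   2 (|cover Z| + |Z|) is within 1 of |V| + |E|.  In P_n o C_m take for Z a set of
   k spokes containing at least one spoke at every hub, possibly together with one cycle edge
   joining two leaves already covered: then |cover Z| + |Z| = n + 2k + q with
   q in {0, 1}, and as |V| + |E| = 3nm + 2n - 1 a suitable k with n < k <= nm exists. *)

From mathcomp Require Import all_boot zify.
Set Implicit Arguments. Unset Strict Implicit. Unset Printing Implicit Defensive.

Lemma set2_eq (T : finType) (a b c d : T) :
  [set a; b] = [set c; d] -> (a = c /\ b = d) \/ (a = d /\ b = c).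
Proof.
move=> E.
have /set2P ha : a \in [set c; d] by rewrite -E set21.
have /set2P hb : b \in [set c; d] by rewrite -E set22.
have /set2P hc : c \in [set a; b] by rewrite E set21.
have /set2P hd : d \in [set a; b] by rewrite E set22.
by case: ha hb hc hd => [] ? [] ? [] ? [] ?; subst; auto.
Qed.

Lemma cardsU_disjoint (T : finType) (A B : {set T}) :
  [disjoint A & B] -> #|A :|: B| = #|A| + #|B|.
Proof. by move/disjoint_setI0; rewrite cardsU => ->; rewrite cards0 subn0. Qed.

Lemma exists_superset_card (T : finType) (A : {set T}) k :
  #|A| <= k <= #|T| -> exists2 X : {set T}, A \subset X & #|X| = k.
Proof.
case/andP=> Ak kT.
have : k - #|A| <= #|~: A| by move: kT; rewrite -(cardsC A); lia.
case/card_geqP=> s [s_uniq s_size sA].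
exists (A :|: [set x in s]); first exact: subsetUl.
rewrite cardsU_disjoint; last first.
  rewrite disjoint_sym disjoints_subset.
  by apply/subsetP=> x; rewrite inE => /sA.
by rewrite cardsE (card_uniqP s_uniq) s_size; lia.
Qed.

Lemma card_sum_preimset (A B : finType) (S : {set A + B}) :
  #|S| = #|inl @^-1: S| + #|inr @^-1: S|.
Proof.
rewrite -!sum1_card (big_sumType _ (mem S)) /=.
by congr (_ + _); apply: eq_bigl => x; rewrite inE.
Qed.

Lemma ordS_ordS_neq m (j : 'I_m) : 2 < m -> ordS (ordS j) != j.
Proof.
case: j => j j_lt m_gt2; apply/eqP=> /(congr1 val) /= /eqP.
rewrite -addn1 modnDml -{2}(modn_small j_lt) addn1 -addn2 -{2}[j]addn0 eqn_modDl.
by rewrite mod0n modn_small.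
Qed.

Lemma edgesP (V : finType) (e : rel V) (A : {set V}) :
  reflect (exists x y, A = [set x; y] /\ e x y) (A \in edges e).
Proof.
rewrite inE; apply: (iffP existsP) => [[x /existsP[y /andP[/eqP ? ?]]]|[x [y [? ?]]]].
  by exists x, y.
by exists x; apply/existsP; exists y; apply/andP; split=> //; apply/eqP.
Qed.

Lemma edges_set2 (V : finType) (e : rel V) x y : e x y -> [set x; y] \in edges e.
Proof. by move=> exy; apply/edgesP; exists x, y. Qed.

Lemma edge_neq0 (V : finType) (e : rel V) (A : {set V}) : A \in edges e -> A != set0.
Proof. by case/edgesP=> x [y [-> _]]; apply/set0Pn; exists x; rewrite set21. Qed.

Definition zero_on (V : finType) (Z : {set {set V}}) (A : {set V}) : bool :=
  A \notin Z.

Section ZeroEdgeSet.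
Variables (V : finType) (e : rel V) (Z : {set {set V}}).
Hypothesis Z_edges : Z \subset edges e.

Lemma vlabel_zero_on v : vlabel e (zero_on Z) v = (v \notin cover Z).
Proof.
rewrite /vlabel; have [/bigcupP[A AZ vA]|vNZ] := boolP (v \in cover Z).
  by rewrite (bigD1 A) /= ?(subsetP Z_edges) // /zero_on AZ.
rewrite big1 // => A /andP[_ vA]; rewrite /zero_on; suff -> : A \notin Z by [].
by apply: contraNN vNZ => AZ; apply/bigcupP; exists A.
Qed.

Lemma zero_on_cordial :
  let a := #|cover Z| + #|Z| in let N := #|V| + #|edges e| in
  N <= 2 * a + 1 -> 2 * a <= N + 1 ->
  total_edge_product_cordial_labeling e (zero_on Z).
Proof.
have v0 : v_count e (zero_on Z) 0 = #|cover Z|.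
  by apply: eq_card => v; rewrite !inE vlabel_zero_on; case: (v \in cover Z).
have v1 : v_count e (zero_on Z) 1 = #|V| - #|cover Z|.
  rewrite -(cardsC (cover Z)) addKn.
  by apply: eq_card => v; rewrite !inE vlabel_zero_on; case: (v \in cover Z).
have e0 : e_count e (zero_on Z) 0 = #|Z|.
  apply: eq_card => A; rewrite [LHS]in_set /zero_on.
  by have [/(subsetP Z_edges)->|] := boolP (A \in Z); rewrite ?andbF.
have e1 : e_count e (zero_on Z) 1 = #|edges e| - #|Z|.
  rewrite -(cardsDS Z_edges).
  by apply: eq_card => A; rewrite [LHS]in_set in_setD /zero_on andbC; case: (A \in Z).
have := subset_leq_card Z_edges; have := max_card (cover Z).
rewrite /total_edge_product_cordial_labeling /= v0 v1 e0 e1.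
(* [set] merges differently elaborated occurrences of the same cardinals, which
   [lia] would otherwise treat as distinct atoms. *)
set c := #|cover Z|; set z := #|Z|; set E := #|edges e|; set nV := #|V|; lia.
Qed.

End ZeroEdgeSet.

Lemma edges_path n :
  edges (@path_adj n.+1) = [set [set widen_ord (leqnSn n) k; lift ord0 k] | k : 'I_n].
Proof.
apply/setP=> A; apply/edgesP/imsetP => [[i [j [-> /orP[]/eqP ij]]]|[k _ ->]].
- have k_lt : i < n by rewrite -ltnS ij.
  exists (Ordinal k_lt) => //.
  by congr [set _; _]; apply: val_inj.
- have k_lt : j < n by rewrite -ltnS ij.
  exists (Ordinal k_lt) => //.
  by rewrite setUC; congr [set _; _]; apply: val_inj.
- by exists (widen_ord (leqnSn n) k), (lift ord0 k); split; rewrite // /path_adj /= eqxx.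
Qed.

Lemma card_edges_path n : #|edges (@path_adj n.+1)| = n.
Proof.
rewrite edges_path card_imset ?card_ord // => k k' /set2_eq[[/(congr1 val) /= kk' _]|[]].
  exact: val_inj.
by move=> /(congr1 val) /= + /(congr1 val) /=; rewrite /bump /=; lia.
Qed.

Lemma edges_cycle m : edges (@cycle_adj m) = [set [set j; ordS j] | j : 'I_m].
Proof.
apply/setP=> A; apply/edgesP/imsetP => [[i [j [-> /orP[]/eqP ij]]]|[j _ ->]].
- by exists i => //; congr [set _; _]; apply: val_inj.
- by exists j => //; rewrite setUC; congr [set _; _]; apply: val_inj.
- by exists j, (ordS j); split; rewrite // /cycle_adj /= eqxx.
Qed.

Lemma card_edges_cycle m : 2 < m -> #|edges (@cycle_adj m)| = m.
Proof.
move=> m_gt2; rewrite edges_cycle card_imset ?card_ord // => j j' /set2_eq[[]//|[-> jj']].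
by have := ordS_ordS_neq j' m_gt2; rewrite jj' eqxx.
Qed.

Section Corona.
Variables (V W : finType) (eG : rel V) (eH : rel W).
Local Notation C := (corona_adj eG eH).

Definition spoke (x : V * W) : {set V + V * W} := [set inl x.1; inr x].
Definition copy (u : V) (B : {set W}) : {set V + V * W} := [set inr (u, w) | w in B].

Lemma spoke_inj : injective spoke.
Proof. by move=> x y /setP/(_ (inr x)); rewrite !inE eqxx /= => /esym/eqP[]. Qed.

Lemma edges_corona : edges C =
  [set inl @: A | A : {set V} in edges eG] :|: [set spoke x | x : V * W]
  :|: [set copy x.1 x.2 | x in setX [set: V] (edges eH)].
Proof.
apply/setP=> S; rewrite !in_setU; apply/edgesP/idP.
  case=> a [b [-> adj]]; case: a b adj => [u|[i w]] [v|[j w']] /= adj.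
  - apply/orP; left; apply/orP; left; apply/imsetP; exists [set u; v].
      exact: edges_set2.
    by rewrite imsetU1 imset_set1.
  - by rewrite (eqP adj); apply/orP; left; apply/orP; right; apply/imsetP; exists (j, w').
  - by rewrite setUC -(eqP adj); apply/orP; left; apply/orP; right; apply/imsetP; exists (i, w).
  - case/andP: adj => /eqP <- ww'; apply/orP; right; apply/imsetP.
    exists (i, [set w; w']); first by rewrite in_setX in_setT edges_set2.
    by rewrite /copy imsetU1 imset_set1.
case/orP=> [/orP[]|] /imsetP.
- case=> A /edgesP[u [v [-> uv]]] ->; exists (inl u), (inl v).
  by rewrite imsetU1 imset_set1.
- by case=> x _ ->; exists (inl x.1), (inr x); case: x => u w /=.
- case=> [[u B]] /setXP[_ /edgesP[w [w' [-> ww']]]] ->; exists (inr (u, w)), (inr (u, w')).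
  by rewrite /copy imsetU1 imset_set1 /= eqxx.
Qed.

Lemma card_edges_corona :
  #|edges C| = #|edges eG| + #|V| * #|W| + #|V| * #|edges eH|.
Proof.
have inr_notin_inl (y : V * W) (A : {set V}) : inr y \notin inl @: A by apply/imsetP=> -[].
have inl_notin_copy u v (B : {set W}) : inl u \notin copy v B by apply/imsetP=> -[].
have copy_inj : {in setX [set: V] (edges eH) &, injective (fun x => copy x.1 x.2)}.
  move=> [u B] [v B'] /setXP[_ /edge_neq0/set0Pn[w Bw]] _ /= uB_vB'.
  have /imsetP[w' _ [vu _]] : inr (u, w) \in copy v B' by rewrite -uB_vB' imset_f.
  rewrite vu in uB_vB' *; congr pair.
  by apply: imset_inj uB_vB' => ? ? [].
rewrite edges_corona !cardsU_disjoint.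
- rewrite card_imset; last exact/imset_inj/inl_inj.
  by rewrite (card_imset _ spoke_inj) card_in_imset // cardsX !cardsT card_prod.
- rewrite disjoint_sym disjoints_subset; apply/subsetP=> _ /imsetP[x _ ->].
  rewrite in_setC; apply/imsetP=> -[A _ /setP/(_ (inr x))].
  by rewrite /spoke set22 (negbTE (inr_notin_inl _ _)).
- rewrite disjoint_sym disjoints_subset; apply/subsetP=> _ /imsetP[[u B] _ ->].
  rewrite in_setC in_setU negb_or; apply/andP; split; apply/imsetP.
  + case=> A /edge_neq0/set0Pn[v Av] /setP/(_ (inl v)).
    by rewrite imset_f // (negbTE (inl_notin_copy _ _ _)).
  + case=> x _ /setP/(_ (inl x.1)).
    by rewrite /spoke set21 (negbTE (inl_notin_copy _ _ _)).
Qed.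

Section Spokes.
Variables (X : {set V * W}) (extra : {set {set V + V * W}}).
Hypothesis extra_leaves : forall S, S \in extra -> S \subset inr @: X.

Lemma card_spokes_extra : #|spoke @: X :|: extra| = #|X| + #|extra|.
Proof.
rewrite cardsU_disjoint; last first.
  rewrite disjoint_sym disjoints_subset; apply/subsetP=> S /extra_leaves /subsetP S_X.
  rewrite in_setC; apply/imsetP=> -[x _ Sx].
  by have /S_X/imsetP[] : inl x.1 \in S by rewrite Sx set21.
by rewrite card_imset //; apply: spoke_inj.
Qed.

Lemma card_cover_spokes_extra :
  (forall u, exists w, (u, w) \in X) -> #|cover (spoke @: X :|: extra)| = #|V| + #|X|.
Proof.
move=> X_hubs; rewrite card_sum_preimset.
have -> : inl @^-1: cover (spoke @: X :|: extra) = [set: V].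
  apply/setP=> u; rewrite !inE; have [w uwX] := X_hubs u.
  by apply/bigcupP; exists (spoke (u, w)); [rewrite in_setU imset_f | exact: set21].
have -> : inr @^-1: cover (spoke @: X :|: extra) = X.
  apply/setP=> x; rewrite inE; apply/bigcupP/idP => [[S]|xX]; last first.
    by exists (spoke x); [rewrite in_setU imset_f | exact: set22].
  rewrite in_setU => /orP[/imsetP[y yX ->] /set2P[//|[->]] //|].
  by move=> /extra_leaves/subsetP S_X /S_X/imsetP[y yX [->]].
by rewrite cardsT.
Qed.

End Spokes.

Variables (u0 : V) (w0 w1 : W).
Hypothesis w0w1 : eH w0 w1.

Lemma corona_zero_edge_set k (q : bool) : #|V|.+1 <= k <= #|V| * #|W| ->
  exists2 Z : {set {set V + V * W}},
    Z \subset edges C & #|cover Z| = #|V| + k /\ #|Z| = k + q.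
Proof.
case/andP=> k_ge k_le.
pose X0 := [set (u, w0) | u : V] :|: [set (u0, w1)].
have [|X X0X cardX] := @exists_superset_card _ X0 k.
  rewrite card_prod k_le andbT.
  apply: leq_trans (leq_card_setU _ _).1 (leq_trans _ k_ge).
  by rewrite cards1 addn1 ltnS leq_imset_card.
have X_hubs u : exists w, (u, w) \in X.
  by exists w0; rewrite (subsetP X0X) // in_setU imset_f.
pose c := copy u0 [set w0; w1].
have c_leaves : c \subset inr @: X.
  apply/subsetP=> _ /imsetP[w /set2P w01 ->]; rewrite imset_f // (subsetP X0X) // in_setU.
  by case: w01 => ->; rewrite ?imset_f ?set11 ?orbT.
have [extra card_extra extraP] :
    exists2 extra : {set {set V + V * W}}, #|extra| = q & forall S, S \in extra -> S = c.
  exists (if q then [set c] else set0) => [|S]; case: q.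
  - exact: cards1.
  - exact: cards0.
  - by move/set1P.
  - by rewrite inE.
have extra_leaves S : S \in extra -> S \subset inr @: X by move/extraP ->.
exists (spoke @: X :|: extra).
  apply/subsetP=> S; rewrite in_setU => /orP[/imsetP[x _ ->]|/extraP ->].
    by apply/edgesP; exists (inl x.1), (inr x); case: x => u w /=.
  rewrite edges_corona in_setU; apply/orP; right; apply/imsetP.
  by exists (u0, [set w0; w1]); rewrite // in_setX in_setT edges_set2.
by rewrite card_cover_spokes_extra // card_spokes_extra // cardX card_extra.
Qed.

End Corona.

Theorem theorem3p2 (n m : nat) (hn : 1 <= n) (hm : 3 <= m) :
  total_edge_product_cordial (corona_adj (@path_adj n) (@cycle_adj m)).
Proof.
case: n hn => // n _; case: m hm => [|[|[|m]]] // _.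
set K := n.+1 * m.+3.
have K_ge : 3 * n.+1 <= K by rewrite /K mulnC leq_mul.
(* With k := T./2 and q := odd T, twice n.+1 + 2 k + q = n.+1 + T is within 1 of
   |V| + |E| = 3 K + 2 n + 1. *)
set T := (3 * K)./2.
have adj01 : @cycle_adj m.+3 ord0 (ordS ord0) by rewrite /cycle_adj eqxx.
have [|Z Z_edges [cover_Z card_Z]] :=
  corona_zero_edge_set (@path_adj n.+1) ord0 adj01 (k := T./2) (odd T).
  rewrite !card_ord -/K; lia.
exists (zero_on Z); apply: zero_on_cordial => //;
  rewrite cover_Z card_Z card_edges_corona card_edges_path card_edges_cycle //;
  rewrite card_sum card_prod !card_ord -/K; have := odd_double_half T; lia.
Qed.
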